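(* Let $m,n$ be relatively prime positive integers and $\pi$ an $(m,n)$-Dyck path. Then \[ \sum_{p\in v_*(\pi)} k(p) \;=\; \sum_{p\in v^*(\pi)} k(p). \]
   Context: An $(m,n)$-Dyck path is a lattice path from $(0,0)$ to $(m,n)$ with steps $(1,0)$ (horizontal) and $(0,1)$ (vertical) staying weakly above the diagonal $y=\frac nm x$. ''The line through a point $p$'' means the line through $p$ parallel to the diagonal. For a lattice point $p$, $k(p)$ is the number of vertical steps of $\pi$ not containing $p$ that the line through $p$ intersects. An outer vertex of $\pi$ is a vertex where a vertical step is followed by a horizontal step, an internal vertex one where a horizontal step is followed by a vertical step; $v^*(\pi)$ is the set of outer vertices except the one farthest from the diagonal, and $v_*(\pi)$ is the set of internal vertices. *)

From mathcomp Require Import all_boot.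
Set Implicit Arguments. Unset Strict Implicit. Unset Printing Implicit Defensive.

(* A lattice path is a sequence of steps: true = vertical step (0,1),
   false = horizontal step (1,0). *)

Definition vertex (s : seq bool) (i : nat) : nat * nat :=
  (count negb (take i s), count id (take i s)).

(* (m,n)-Dyck path: m horizontal steps, n vertical steps, every vertex
   (x,y) weakly above the diagonal y = (n/m) x, i.e. n*x <= m*y. *)
Definition dyck (m n : nat) (s : seq bool) : bool :=
  [&& count negb s == m, count id s == n &
      all (fun i => n * (vertex s i).1 <= m * (vertex s i).2) (iota 0 (size s).+1)].

(* The vertical step number j (i.e. nth false s j = true) goes from
   vertex s j to (vertex s j).1, (vertex s j).2 + 1. *)
Definition vstep (s : seq bool) (j : nat) : bool := nth false s j.

(* The line through p parallel to y = (n/m)x meets the vertical segment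
   from (x,y) to (x,y+1):  y <= p.2 + n/m (x - p.1) <= y+1, cleared of
   denominators. *)
Definition line_meets (m n : nat) (p : nat * nat) (x y : nat) : bool :=
  (m * y + n * p.1 <= m * p.2 + n * x) && (m * p.2 + n * x <= m * y + m + n * p.1).

Definition seg_contains (p : nat * nat) (x y : nat) : bool :=
  (p.1 == x) && (y <= p.2 <= y.+1).

Definition kval (m n : nat) (s : seq bool) (p : nat * nat) : nat :=
  count (fun j => [&& vstep s j,
                     line_meets m n p (vertex s j).1 (vertex s j).2 &
                     ~~ seg_contains p (vertex s j).1 (vertex s j).2])
        (iota 0 (size s)).

Definition outer (s : seq bool) (i : nat) : bool :=
  nth false s i.-1 && ~~ nth false s i.

Definition internal (s : seq bool) (i : nat) : bool :=
  ~~ nth false s i.-1 && nth false s i.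

(* Distance from the diagonal, up to the positive factor 1/sqrt(m^2+n^2):
   m*y - n*x (nonnegative on a Dyck path). *)
Definition level (m n : nat) (p : nat * nat) : nat := m * p.2 - n * p.1.

Definition max_outer_level (m n : nat) (s : seq bool) : nat :=
  \max_(1 <= i < size s | outer s i) level m n (vertex s i).

Definition outer_star (m n : nat) (s : seq bool) (i : nat) : bool :=
  outer s i && (level m n (vertex s i) != max_outer_level m n s).

(* Write [level p = m y - n x] for a vertex [p = (x, y)]; the line through [p]
   meets the vertical step from level [l] to [l + m] iff [l <= level p <= l + m].
   Coprimality makes the levels of the vertices [0 .. m + n - 1] pairwise
   distinct.  Give each vertex its turn: [+1] at an outer vertex, [-1] at an
   internal one, counting the origin as internal.  At a turning vertex [p],
   [k(p) + 1] is the number of up-steps crossing a level [c] next to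
   [level p], and that number equals the sum of the turns of the vertices of
   level at least [c].  Hence [sum_p turn p * (k(p) + 1)] becomes
   [sum_(p,q) turn p * turn q * [level p <= level q]] up to a diagonal
   correction; symmetrising in [p, q] evaluates it, and one finds
   [sum_p turn p * k(p) = 0].  The outer vertex farthest from the diagonal has
   [k = 0], since no up-step reaches above its level. *)

From mathcomp Require Import all_boot.
From mathcomp Require Import all_algebra zify ring.
Set Implicit Arguments. Unset Strict Implicit. Unset Printing Implicit Defensive.
Import GRing.Theory Num.Theory.

Definition b2z (b : bool) : int := (b : nat)%:Z.

Section WalkTurns.
Local Open Scope ring_scope.
Variables (N : nat) (d : nat -> bool) (L : nat -> nat).

Lemma sum_mul_eq (F : nat -> int) p :
  (p < N)%N -> \sum_(0 <= q < N) F q * b2z (q == p) = F p.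
Proof.
move=> pN; rewrite (eq_bigr (fun q => if q == p then F q else 0)) => [|q _].
  by rewrite -big_mkcond big_nat1_eq /= pN.
by rewrite /b2z; case: (q == p); rewrite ?mulr1 ?mulr0.
Qed.

(* [turn p] is [1] at a peak (up-step then down-step), [-1] at a valley and
   [0] elsewhere; the start [p = 0] counts as a valley, so that turns sum to 0. *)
Definition turn p : int := if p == 0%N then -1 else b2z (d p.-1) - b2z (d p).

Definition peak p : int := b2z (turn p == 1).
Definition valley p : int := b2z (turn p == -1).

Lemma turnE p : turn p = peak p - valley p.
Proof.
by rewrite /peak /valley /turn /b2z; case: (p == 0%N) => //; case: (d p.-1) (d p) => [] [].
Qed.

Lemma turn_sqr p : turn p * turn p = peak p + valley p.
Proof.
by rewrite /peak /valley /turn /b2z; case: (p == 0%N) => //; case: (d p.-1) (d p) => [] [].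
Qed.

Lemma turn_valley p : turn p * valley p = - valley p.
Proof. by rewrite /valley /turn /b2z; case: (p == 0%N) => //; case: (d p.-1) (d p) => [] []. Qed.

Lemma sum_turn_mul (F : nat -> nat) :
  \sum_(1 <= p < N) turn p * (F p)%:Z =
  (\sum_(1 <= p < N | d p.-1 && ~~ d p) F p)%:Z - (\sum_(1 <= p < N | ~~ d p.-1 && d p) F p)%:Z.
Proof.
rewrite !(big_morph Posz PoszD (erefl 0%:Z)) [X in _ = X - _]big_mkcond.
rewrite [X in _ - X]big_mkcond -sumrB /=.
apply: eq_big_nat => -[//|p] _; rewrite /turn /=.
by case: (d p) (d p.+1) => [] []; rewrite /b2z /=; lia.
Qed.

Definition up_crossings c : int :=
  \sum_(0 <= j < N) b2z (d j) * (b2z (c <= L j.+1)%N - b2z (c <= L j)%N).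

Definition turns_above c : int := \sum_(0 <= q < N) turn q * b2z (c <= L q)%N.

Definition meets p : int := \sum_(0 <= j < N) b2z (d j && (L j <= L p <= L j.+1)%N).

(* At a valley the level [L p] is the top of the preceding up-step, at a peak
   the bottom of the following down-step; shifting valleys by one makes every
   meeting up-step a strict crossing of the level [cut p]. *)
Definition cut p : nat := (L p + (turn p == -1 :> int))%N.

Section Levels.
Hypothesis L_inj : forall i j, (i < N)%N -> (j < N)%N -> L i = L j -> i = j.

Lemma b2z_leq_sym p q : (p < N)%N -> (q < N)%N ->
  b2z (L p <= L q)%N + b2z (L q <= L p)%N = 1 + b2z (q == p).
Proof.
move=> pN qN; case: (eqVneq q p) => [->|qp]; first by rewrite leqnn.
have : L q != L p by apply: contra_neq qp => /L_inj; apply.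
by rewrite /b2z; do ! case: leqP => ? /=; lia.
Qed.

Lemma turns_above_cut p : (p < N)%N -> turns_above (cut p) = turns_above (L p) + valley p.
Proof.
move=> pN; rewrite /turns_above -[valley p]opprK -turn_valley.
rewrite -(sum_mul_eq (fun q => turn q * valley p) pN) -sumrN -big_split /=.
apply: eq_big_nat => q /andP[_ qN]; rewrite -mulrA -mulrN -mulrDr; congr (_ * _).
rewrite /cut /valley; case: (turn p == -1) => /=; last by rewrite addn0 /b2z mul0r subr0.
case: (eqVneq q p) => [->|qp]; first by rewrite /b2z addn1 ltnn leqnn.
have : L q != L p by apply: contra_neq qp => /L_inj; apply.
by rewrite /b2z mul1r; do ! case: leqP => ? /=; lia.
Qed.

Hypothesis L0 : L 0 = 0%N.

Lemma L_gt0 q : (0 < q < N)%N -> (0 < L q)%N.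
Proof. by move=> /andP[q0 qN]; rewrite lt0n -L0; apply/eqP => /L_inj; lia. Qed.

Hypothesis LN : L N = 0%N.

Lemma L_inj_succ i j : (0 < i <= N)%N -> (0 < j <= N)%N -> L i = L j -> i = j.
Proof.
have L_N q : (0 < q < N)%N -> L q != L N.
  by move=> /andP[q0 qN]; apply/eqP; rewrite LN -L0 => /L_inj; lia.
move=> /andP[i0 iN] /andP[j0 jN] eij.
case: (ltnP i N) => iN'; case: (ltnP j N) => jN'; try lia; first exact: L_inj.
- by have := L_N i; rewrite eij (_ : j = N); lia.
- by have := L_N j; rewrite -eij (_ : i = N); lia.
Qed.

Hypothesis L_up : forall j, (j < N)%N -> d j -> (L j < L j.+1)%N.

Lemma meets_up_crossings p :
  (0 < p < N)%N -> turn p != 0 -> meets p = up_crossings (cut p).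
Proof.
move=> /andP[p0 pN] turn_p; apply: eq_big_nat => j /andP[_ jN].
case dj: (d j); last by rewrite /b2z mul0r.
have Lj := L_up jN dj.
move: turn_p; rewrite /cut /turn; case: p p0 pN => // p _ pN /=.
case dp: (d p); case dp1: (d p.+1) => //= _.
- have : L j != L p.+1 by apply/eqP => /(L_inj jN pN) ej; rewrite ej dp1 in dj.
  by rewrite /b2z; do ! case: leqP => ? /=; lia.
- have : L j.+1 != L p.+1.
    apply/eqP => e; have ej : j = p by apply/succn_inj/(L_inj_succ _ _ e); lia.
    by rewrite ej dp in dj.
  by rewrite /b2z; do ! case: leqP => ? /=; lia.
Qed.

End Levels.

Section ClosedWalk.
Hypothesis N_gt1 : (1 < N)%N.
Hypothesis d_first : d 0.
Hypothesis d_last : ~~ d N.-1.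

Lemma sum_turn_from1 : \sum_(1 <= q < N) turn q = 1.
Proof.
rewrite (telescope_sumr_eq (fun q => - b2z (d q.-1))) ?(ltnW N_gt1) //=; last first.
  by case=> // k _; rewrite /turn opprK addrC.
by rewrite d_first; move: d_last; case: (d _).
Qed.

Lemma sum_turn : \sum_(0 <= q < N) turn q = 0.
Proof. by rewrite big_ltn ?(ltnW N_gt1) // sum_turn_from1 /turn eqxx addNr. Qed.

Lemma sum_peak : \sum_(0 <= p < N) peak p = \sum_(0 <= p < N) valley p.
Proof.
apply/eqP; rewrite -subr_eq0 -sumrB; apply/eqP; rewrite -[RHS]sum_turn.
by apply: eq_bigr => p _; rewrite turnE.
Qed.

Lemma up_crossingsE c : up_crossings c = turns_above c.
Proof.
rewrite /up_crossings /turns_above (eq_bigr _ (fun j _ => mulrBr _ _ _)) sumrB.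
case: N N_gt1 d_last => // N' _ /negbTE dN'.
rewrite big_nat_recr //= dN' mul0r addr0 !big_nat_recl // d_first /turn eqxx /=.
rewrite [in RHS](eq_bigr (fun i => b2z (d i) * b2z (c <= L i.+1)%N
                                 - b2z (d i.+1) * b2z (c <= L i.+1)%N)) => [|i _].
  by rewrite sumrB /b2z /=; ring.
by rewrite mulrBl.
Qed.

Hypothesis L_up : forall j, (j < N)%N -> d j -> (L j < L j.+1)%N.
Hypothesis L_inj : forall i j, (i < N)%N -> (j < N)%N -> L i = L j -> i = j.
Hypothesis L0 : L 0 = 0%N.
Hypothesis LN : L N = 0%N.

Lemma sum_turns_above_level :
  \sum_(0 <= p < N) turn p * turns_above (L p) = \sum_(0 <= p < N) valley p.
Proof.
set A := LHS.
have AE : A = \sum_(0 <= p < N) \sum_(0 <= q < N) turn p * turn q * b2z (L p <= L q)%N.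
  by apply: eq_bigr => p _; rewrite mulr_sumr; apply: eq_bigr => q _; rewrite mulrA.
have A2 : A + A = \sum_(0 <= p < N) (peak p + valley p).
  rewrite AE [X in _ + X]exchange_big -big_split /=.
  apply: eq_big_nat => p /andP[_ pN]; rewrite -big_split /=.
  rewrite (eq_big_nat _ _ (F2 := fun q => turn p * turn q + turn p * turn q * b2z (q == p))).
    by rewrite big_split /= -mulr_sumr sum_turn mulr0 add0r sum_mul_eq // turn_sqr.
  by move=> q /andP[_ qN]; rewrite [turn q * _]mulrC -mulrDr (b2z_leq_sym L_inj) // mulrDr mulr1.
by move: A2; rewrite big_split /= sum_peak -!mulr2n => /pmulrnI; apply.
Qed.

Lemma sum_turn_turns_above_cut : \sum_(0 <= p < N) turn p * turns_above (cut p) = 0.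
Proof.
rewrite (eq_big_nat _ _ (F2 := fun p => turn p * turns_above (L p) - valley p)).
  by rewrite sumrB sum_turns_above_level subrr.
by move=> p /andP[_ pN]; rewrite (turns_above_cut L_inj) // mulrDr turn_valley.
Qed.

Lemma sum_turn_meets : \sum_(1 <= p < N) turn p * meets p = 1.
Proof.
have -> : \sum_(1 <= p < N) turn p * meets p = \sum_(1 <= p < N) turn p * turns_above (cut p).
  apply: eq_big_nat => p p_range; have [->|turn_p] := eqVneq (turn p) 0.
    by rewrite !mul0r.
  by rewrite (meets_up_crossings L_inj L0 LN L_up) // up_crossingsE.
have turns_above_cut0 : turns_above (cut 0) = 1.
  rewrite /cut /turn eqxx /= L0 /turns_above big_ltn ?(ltnW N_gt1) // L0 mulr0 add0r.
  by rewrite -sum_turn_from1; apply: eq_big_nat => q q_range; rewrite (L_gt0 L_inj L0) ?mulr1.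
move: sum_turn_turns_above_cut; rewrite big_ltn ?(ltnW N_gt1) // turns_above_cut0.
by rewrite /turn eqxx mulr1 addrC => /eqP; rewrite subr_eq0 => /eqP.
Qed.

End ClosedWalk.
End WalkTurns.

Section Vertices.
Variable s : seq bool.

Lemma vertex_sum i : i <= size s -> (vertex s i).1 + (vertex s i).2 = i.
Proof.
move=> iN; rewrite /vertex /= -[count negb _]/(count (predC id) _) addnC count_predC.
by rewrite size_take_min; apply/minn_idPl.
Qed.

Lemma vertexS j : j < size s ->
  vertex s j.+1 = if nth false s j then ((vertex s j).1, (vertex s j).2.+1)
                  else ((vertex s j).1.+1, (vertex s j).2).
Proof.
move=> jN; rewrite /vertex (take_nth false) // -cats1 !count_cat /=.
by case: (nth false s j); rewrite /= ?addn0 ?addn1.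
Qed.

Lemma seg_contains_vertex p j : p <= size s -> j < size s -> nth false s j ->
  seg_contains (vertex s p) (vertex s j).1 (vertex s j).2 = (p == j) || (p == j.+1).
Proof.
move=> pN jN dj; have := vertex_sum pN; have := vertex_sum (ltnW jN).
rewrite /seg_contains => sj sp.
apply/idP/idP => [/andP[/eqP xp /andP[yp1 yp2]]|/orP[] /eqP ->]; first lia.
- by rewrite eqxx leqnn leqnSn.
- by rewrite vertexS // dj /= eqxx leqnSn leqnn.
Qed.

End Vertices.

Section DyckPath.
Variables (m n : nat) (s : seq bool).

Local Notation N := (size s).
Local Notation d := (nth false s).
Local Notation x i := (vertex s i).1.
Local Notation y i := (vertex s i).2.
Local Notation lv i := (level m n (vertex s i)).
Local Notation meets_s := (meets N d (fun i => lv i)).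

Lemma level0 : lv 0 = 0.
Proof. by rewrite /level /vertex take0 /= !muln0. Qed.

Hypothesis dyck_s : dyck m n s.

Lemma count_horizontal : count negb s = m.
Proof. by case/and3P: dyck_s => /eqP. Qed.

Lemma count_vertical : count id s = n.
Proof. by case/and3P: dyck_s => _ /eqP. Qed.

Lemma size_dyck : N = m + n.
Proof. by rewrite -count_horizontal -count_vertical addnC -(count_predC id). Qed.

Lemma vertex_size : vertex s N = (m, n).
Proof. by rewrite /vertex take_size count_horizontal count_vertical. Qed.

Lemma dyck_vertex i : i <= N -> n * x i <= m * y i.
Proof. by move=> iN; case/and3P: dyck_s => _ _ /allP; apply; rewrite mem_iota. Qed.

Lemma levelE i : i <= N -> lv i + n * x i = m * y i.
Proof. by move=> /dyck_vertex; rewrite /level; lia. Qed.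

Lemma level_up j : j < N -> d j -> lv j.+1 = lv j + m.
Proof.
move=> jN dj; have := levelE (ltnW jN); have := levelE jN.
by rewrite vertexS // dj /=; nia.
Qed.

Lemma level_down j : j < N -> ~~ d j -> lv j.+1 + n = lv j.
Proof.
move=> jN /negbTE dj; have := levelE (ltnW jN); have := levelE jN.
by rewrite vertexS // dj /=; nia.
Qed.

Lemma level_size : lv N = 0.
Proof. by rewrite vertex_size /level /= mulnC subnn. Qed.

Lemma line_meets_level p j : p <= N -> j <= N ->
  line_meets m n (vertex s p) (x j) (y j) = (lv j <= lv p <= lv j + m).
Proof.
move=> pN jN; have := levelE pN; have := levelE jN => Lj Lp.
by rewrite /line_meets; apply/idP/idP => /andP[le1 le2]; apply/andP; split; lia.
Qed.

Lemma kval_summand p j : 0 < p < N -> j < N ->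
  (b2z [&& vstep s j, line_meets m n (vertex s p) (x j) (y j)
         & ~~ seg_contains (vertex s p) (x j) (y j)]
   + b2z (d p) * b2z (j == p) + b2z (d p.-1) * b2z (j == p.-1)
   = b2z (d j && (lv j <= lv p <= lv j.+1)%N))%R.
Proof.
move=> /andP[p0 pN] jN; rewrite /vstep.
case dj: (d j); last first.
  by case: eqP => [<-|_]; case: eqP => [<-|_]; rewrite /b2z ?dj /= ?mul0r ?mulr0 ?addr0.
rewrite level_up // line_meets_level ?(ltnW pN) ?(ltnW jN) //.
rewrite seg_contains_vertex ?(ltnW pN) //.
case: (eqVneq j p) => [ejp|jp].
  by subst j; rewrite dj leqnn leq_addr (_ : (p == p.-1) = false) /b2z /=; lia.
case: (eqVneq p j.+1) => [pj|pj].
  by subst p; rewrite level_up //= dj eqxx leqnn leq_addr /b2z /=; lia.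
by rewrite (_ : (j == p.-1) = false) /b2z /= ?mulr0 ?addr0 ?andbT //; lia.
Qed.

Hypotheses (m_gt0 : 0 < m) (n_gt0 : 0 < n).

Lemma size_gt1 : 1 < N.
Proof. by rewrite size_dyck; lia. Qed.

Lemma dyck_first : d 0.
Proof.
apply/negPn/negP => d0; have := dyck_vertex (ltnW size_gt1).
by rewrite vertexS ?(ltnW size_gt1) // (negbTE d0) /vertex take0 /=; lia.
Qed.

Lemma dyck_last : ~~ d N.-1.
Proof.
have NN : N.-1 < N by have := size_gt1; lia.
apply/negP => dN; have := dyck_vertex (ltnW NN).
have := vertex_size; rewrite -{1}(ltn_predK NN) vertexS // dN /vertex /= => -[xN yN].
by rewrite xN; nia.
Qed.

Lemma level_lt_up j : j < N -> d j -> lv j < lv j.+1.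
Proof. by move=> jN dj; rewrite level_up //; lia. Qed.

Lemma kval_meets p : 0 < p < N ->
  ((kval m n s (vertex s p))%:Z + b2z (d p) + b2z (d p.-1) = meets_s p)%R.
Proof.
move=> /andP[p0 pN]; have p1N : p.-1 < N by lia.
rewrite /kval; have -> : iota 0 N = index_iota 0 N by rewrite /index_iota subn0.
rewrite -sumn_count sumnE big_map (big_morph Posz PoszD (erefl (Posz 0))).
rewrite -(sum_mul_eq (fun=> b2z (d p)) pN) -(sum_mul_eq (fun=> b2z (d p.-1)) p1N).
by rewrite -!big_split; apply: eq_big_nat => j /andP[_ jN]; rewrite /= kval_summand ?p0.
Qed.

Lemma turn_kval p : 0 < p < N ->
  (turn d p * (kval m n s (vertex s p))%:Z = turn d p * (meets_s p - 1))%R.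
Proof.
move=> p_range; rewrite -kval_meets // /turn; case: p p_range => //= p _.
by case: (d p); case: (d p.+1); rewrite /b2z /=; lia.
Qed.

(* A highest vertex is an outer vertex: its neighbours are strictly lower. *)
Lemma level_le_max_outer j : j <= N -> lv j <= max_outer_level m n s.
Proof.
have [i i_gt0 i_max] :=
  @arg_maxnP _ (Ordinal size_gt1) (fun i : 'I_N => 0 < i) (fun i => lv i) isT.
have iN := ltn_ord i.
have level_le k : k <= N -> lv k <= lv i.
  move=> kN; case: (posnP k) => [->|k0]; first by rewrite level0.
  case: (ltnP k N) => [kN'|Nk]; last by rewrite (_ : k = N) ?level_size; lia.
  exact: (i_max (Ordinal kN')).
have outer_i : outer s i.
  apply/andP; split.
    apply/negPn/negP => di1.
    have i_ne1 : nat_of_ord i != 1 by apply: contraNneq di1 => ->; exact: dyck_first.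
    have := level_down (_ : i.-1 < N) di1; rewrite prednK //.
    by have := level_le i.-1; lia.
  apply/negP => di; have iN1 : i.+1 < N.
    by rewrite ltn_neqAle iN andbT; apply: contraNneq dyck_last => <-.
  by have := level_up iN di; have := level_le i.+1; lia.
move=> jN; apply: leq_trans (level_le j jN) _.
by apply: (leq_bigmax_seq (F := fun i => lv i)); rewrite ?mem_index_iota ?i_gt0.
Qed.

Hypothesis coprime_mn : coprime m n.

(* Equal levels force [(m + n) * (y j - y i) = n * (j - i)]; as [m + n] is
   coprime to [n], it divides [j - i < m + n]. *)
Lemma level_inj i j : i < N -> j < N -> lv i = lv j -> i = j.
Proof.
wlog ij : i j / i <= j.
  move=> wlog_ij iN jN eij; case: (leqP i j) => [|/ltnW] ij; first exact: wlog_ij.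
  by symmetry; apply: wlog_ij.
move=> iN jN eij; apply/eqP; rewrite eqn_leq ij /=; apply/negP => ji.
have := levelE (ltnW iN); have := levelE (ltnW jN).
have := vertex_sum (ltnW iN); have := vertex_sum (ltnW jN) => Sj Si Lj Li.
have key : n * (j - i) = (m + n) * (y j - y i) by nia.
have coprime_mnn : coprime (m + n) n by rewrite /coprime gcdnC gcdnDr gcdnC.
have : m + n %| j - i by rewrite -(Gauss_dvdr _ coprime_mnn) key dvdn_mulr.
by move/dvdn_leq; rewrite -size_dyck; lia.
Qed.

Lemma sum_turn_kval : (\sum_(1 <= p < N) turn d p * (kval m n s (vertex s p))%:Z = 0)%R.
Proof.
have sum_turn_1 := sum_turn_from1 size_gt1 dyck_first dyck_last.
have := sum_turn_meets size_gt1 dyck_first dyck_last level_lt_up level_inj level0 level_size.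
rewrite (eq_big_nat _ _ turn_kval) (eq_bigr _ (fun p _ => mulrBr _ _ _)) sumrB => ->.
by rewrite (eq_bigr _ (fun p _ => mulr1 _)) sum_turn_1 subrr.
Qed.

Lemma kval_outer_max i : 0 < i < N -> outer s i -> lv i = max_outer_level m n s ->
  kval m n s (vertex s i) = 0.
Proof.
move=> i_range /andP[di1 /negbTE di] i_max; have i1N : i.-1 < N by lia.
have meets1 : meets_s i = 1%R.
  rewrite /meets -(sum_mul_eq (fun=> 1%R) i1N); apply: eq_big_nat => j /andP[_ jN].
  rewrite mul1r; case: (eqVneq j i.-1) => [->|j_ne].
    have := level_lt_up i1N di1; rewrite prednK; last by case/andP: i_range.
    by rewrite di1 leqnn => /ltnW ->.
  case dj: (d j) => //=; rewrite /b2z; apply/eqP; rewrite eqz_nat eqb0 negb_and.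
  have := level_le_max_outer jN; rewrite -i_max leq_eqVlt.
  case/orP=> [/eqP e|lt]; last by rewrite orbC -ltnNge lt.
  have ji : j.+1 = i by apply: (L_inj_succ level_inj level0 level_size _ _ e); lia.
  by move: j_ne; rewrite -ji eqxx.
by move: (kval_meets i_range); rewrite meets1 di di1 /b2z; lia.
Qed.

Lemma sum_outer_star_kval :
  \sum_(1 <= i < N | outer_star m n s i) kval m n s (vertex s i) =
  \sum_(1 <= i < N | outer s i) kval m n s (vertex s i).
Proof.
rewrite big_mkcond [RHS]big_mkcond; apply: eq_big_nat => i i_range.
rewrite /outer_star; case outer_i: (outer s i) => //=.
by case: eqP => //= i_max; rewrite kval_outer_max.
Qed.

End DyckPath.

Theorem mainTheorem4 (m n : nat) (s : seq bool) :
  0 < m -> 0 < n -> coprime m n -> dyck m n s ->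
  \sum_(1 <= i < size s | internal s i) kval m n s (vertex s i) =
  \sum_(1 <= i < size s | outer_star m n s i) kval m n s (vertex s i).
Proof.
move=> m_gt0 n_gt0 coprime_mn dyck_s.
rewrite sum_outer_star_kval //; apply/eqP; rewrite -eqz_nat eq_sym -subr_eq0.
have := sum_turn_kval dyck_s m_gt0 n_gt0 coprime_mn.
by rewrite sum_turn_mul => /eqP.
Qed.
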